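(* Satisfaction approval voting (SAV) is the only BSWAV rule (for the fixed $m$ and $k$) that satisfies party-proportionality and aversion to unanimous committees.
   Context: Let $\mathcal C=\{c_1,\dots,c_m\}$ ($m\ge2$) be the candidates, $\mathcal A$ the set of non-empty subsets of $\mathcal C$ (ballots), and a profile a map $A:N_A\to\mathcal A$ from a non-empty finite set of voters $N_A\subseteq\mathbb N$. Fix $k\in\{1,\dots,m-1\}$, and let $\mathcal W_k$ be the set of $k$-element subsets of $\mathcal C$ (committees). An ABC voting rule maps each profile to a non-empty subset of $\mathcal W_k$. A BSWAV rule is defined by a weight vector $\alpha\in\mathbb R^m_{\ge0}$ and chooses for each profile $A$ the committees $W$ maximizing $\sum_{i\in N_A}\alpha_{|A_i|}|A_i\cap W|$. SAV is the BSWAV rule with $\alpha_x=1/x$ for $x\in\{1,\dots,m\}$. A profile $A$ is a party-list profile if there is a partition $\mathcal P_A=\{P_1,\dots,P_\ell\}$ of $\mathcal C$ such that every voter's ballot equals some $P_j$; $n_j$ denotes the number of voters whose ballot is $P_j$. An ABC voting rule $f$ is party-proportional if for all party-list profiles $A$, all $W\in f(A)$, and all parties $P_i,P_j\in\mathcal P_A$ with $n_i/|P_i|<n_j/|P_j|$, $P_i\subseteq W$ implies $P_j\subseteq W$. $f$ satisfies aversion to unanimous committees if for all party-list profiles $A$ and parties $P_i\in\mathcal P_A$: if $W\subseteq P_i$ for all $W\in f(A)$, then $n_i/|P_i|>n_j$ for every other party $P_j\in\mathcal P_A$ with $|P_j|=1$. *)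

From mathcomp Require Import all_boot all_order all_algebra.
From mathcomp Require Import reals.
Set Implicit Arguments. Unset Strict Implicit. Unset Printing Implicit Defensive.
Import Order.TTheory GRing.Theory Num.Theory.
Local Open Scope ring_scope.

Record profile (m : nat) := Profile {
  voters : seq nat;
  ballot : nat -> {set 'I_m};
  voters_uniq : uniq voters;
  voters_nonempty : voters != [::];
  ballots_nonempty : forall i, i \in voters -> ballot i != set0
}.

Definition committee (m k : nat) (W : {set 'I_m}) : bool := #|W| == k.

Definition ABC_rule (m : nat) := profile m -> {set {set 'I_m}}.

Definition is_ABC_rule (m k : nat) (f : ABC_rule m) : Prop :=
  forall A : profile m, f A != set0 /\ forall W, W \in f A -> committee k W.

Definition bswav_score (R : realType) (m : nat) (alpha : nat -> R)
    (A : profile m) (W : {set 'I_m}) : R :=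
  \sum_(i <- voters A) alpha #|ballot A i| * (#|ballot A i :&: W|)%:R.

Definition BSWAV (R : realType) (m k : nat) (alpha : nat -> R) : ABC_rule m :=
  fun A => [set W : {set 'I_m} | committee k W &&
     [forall W' : {set 'I_m}, committee k W' ==>
        (bswav_score alpha A W' <= bswav_score alpha A W)]].

Definition sav_weight (R : realType) (x : nat) : R := (x%:R)^-1.

Definition SAV (R : realType) (m k : nat) : ABC_rule m :=
  BSWAV k (@sav_weight R).

Definition party_list_wrt (m : nat) (A : profile m) (P : {set {set 'I_m}}) : Prop :=
  partition P [set: 'I_m] /\ forall i, i \in voters A -> ballot A i \in P.

Definition is_party_list (m : nat) (A : profile m) : Prop :=
  exists P, party_list_wrt A P.

Definition nvotes (m : nat) (A : profile m) (Pj : {set 'I_m}) : nat :=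
  count (fun i => ballot A i == Pj) (voters A).

Definition party_proportional (R : realType) (m : nat) (f : ABC_rule m) : Prop :=
  forall (A : profile m) (P : {set {set 'I_m}}), party_list_wrt A P ->
  forall W, W \in f A ->
  forall Pi Pj, Pi \in P -> Pj \in P ->
    (nvotes A Pi)%:R / (#|Pi|)%:R < (nvotes A Pj)%:R / (#|Pj|)%:R :> R ->
    Pi \subset W -> Pj \subset W.

Definition aversion_unanimous (R : realType) (m : nat) (f : ABC_rule m) : Prop :=
  forall (A : profile m) (P : {set {set 'I_m}}), party_list_wrt A P ->
  forall Pi, Pi \in P ->
    (forall W, W \in f A -> W \subset Pi) ->
    forall Pj, Pj \in P -> Pj != Pi -> #|Pj| = 1%N ->
      (nvotes A Pj)%:R < (nvotes A Pi)%:R / (#|Pi|)%:R :> R.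

(* On a party-list profile the SAV weight of a candidate is the ratio n_j/|P_j| of its
   party, and a committee wins iff its candidates have maximal weights; this gives both
   axioms for SAV.  Conversely, compare a party Q of size x < m with a singleton party
   {c} whose ratio differs from that of Q by one.  If x*alpha_x > alpha_1, a large
   ratio makes the members of Q outweigh c although c has the larger ratio: when x <= k
   some winner contains Q but not c, against party-proportionality, and when x > k
   every winner lies inside Q although c has more votes than Q's ratio, against
   aversion to unanimous committees.  If x*alpha_x < alpha_1, symmetrically c
   outweighs Q with the smaller ratio.  Hence x*alpha_x = alpha_1 > 0, which makes the
   rule rank committees like SAV. *)

From mathcomp Require Import all_boot all_order all_algebra.
From mathcomp Require Import reals.
From mathcomp Require Import zify ring lra.
Set Implicit Arguments. Unset Strict Implicit. Unset Printing Implicit Defensive.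
Import Order.TTheory GRing.Theory Num.Theory.
Local Open Scope ring_scope.

Lemma exists_subset_card (T : finType) (S : {set T}) (n : nat) :
  (n <= #|S|)%N -> exists2 A : {set T}, A \subset S & #|A| = n.
Proof.
case/card_geqP => s [s_uniq s_size s_sub]; exists [set x in s].
  by apply/subsetP => x; rewrite inE => /s_sub.
by rewrite cardsE (card_uniqP s_uniq).
Qed.

Lemma exists_nested_sets m x k : (x <= k < m)%N ->
  exists c : 'I_m, exists Q W : {set 'I_m},
    [/\ #|Q| = x, #|W| = k, Q \subset W & c \notin W].
Proof.
case/andP=> x_le_k k_lt_m; pose c : 'I_m := Ordinal (leq_ltn_trans (leq0n k) k_lt_m).
have [W W_c card_W] : exists2 W : {set 'I_m}, W \subset ~: [set c] & #|W| = k.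
  by apply: exists_subset_card; rewrite cardsC1 card_ord; lia.
have [Q Q_W card_Q] : exists2 Q : {set 'I_m}, Q \subset W & #|Q| = x.
  by apply: exists_subset_card; rewrite card_W.
exists c, Q, W; split=> //.
by apply/negP => /(subsetP W_c); rewrite !inE eqxx.
Qed.

Lemma exists_crossing_sets m x k : (0 < x < m)%N -> (0 < k < m)%N ->
  exists c e : 'I_m, exists Q W : {set 'I_m},
    [/\ #|Q| = x, #|W| = k, c \in W :\: Q & e \in Q :\: W].
Proof.
move=> /andP[x_gt0 x_lt_m] /andP[k_gt0 k_lt_m].
have [c [e [_ _ c_e]]] : exists c e : 'I_m, [/\ c \in setT, e \in setT & c != e].
  by apply/card_gt1P; rewrite cardsT card_ord; lia.
have card_ce : #|~: [set c; e]| = (m - 2)%N by rewrite cardsCs setCK cards2 c_e card_ord.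
have [Q Q_ce card_Q] : exists2 Q : {set 'I_m}, Q \subset ~: [set c; e] & #|Q| = x.-1.
  by apply: exists_subset_card; rewrite card_ce; lia.
have [W W_ce card_W] : exists2 W : {set 'I_m}, W \subset ~: [set c; e] & #|W| = k.-1.
  by apply: exists_subset_card; rewrite card_ce; lia.
have notin_ce (S : {set 'I_m}) : S \subset ~: [set c; e] -> (c \notin S) && (e \notin S).
  by move/subsetP => S_ce; apply/andP; split; apply/negP => /S_ce; rewrite !inE eqxx ?orbT.
have /andP[cQ eQ] := notin_ce _ Q_ce; have /andP[cW eW] := notin_ce _ W_ce.
exists c, e, (e |: Q), (c |: W); split.
- by rewrite cardsU1 eQ card_Q; lia.
- by rewrite cardsU1 cW card_W; lia.
- by rewrite !inE eqxx negb_or c_e cQ.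
- by rewrite !inE eqxx negb_or eq_sym c_e eW.
Qed.

Lemma card_swap (T : finType) (W : {set T}) d p : d \in W -> p \notin W ->
  #|p |: (W :\ d)| = #|W|.
Proof.
by move=> dW pW; rewrite cardsU1 !inE negb_and pW orbT (cardsD1 d W) dW add1n.
Qed.

Lemma ler_sum_threshold (R : numDomainType) (T : finType) (w : T -> R) (t : R) (W W' : {set T}) :
  #|W'| = #|W| -> (forall j, j \in W -> t <= w j) -> (forall j, j \notin W -> w j <= t) ->
  \sum_(j in W') w j <= \sum_(j in W) w j.
Proof.
move=> card_W' t_le_W W_le_t.
rewrite (big_setID (A := W') W) [leRHS](big_setID (A := W) W') /= setIC lerD2l.
have card_D : #|W' :\: W| = #|W :\: W'|.
  by have := cardsID W W'; have := cardsID W' W; rewrite setIC; lia.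
apply: (@le_trans _ _ (\sum_(j in W' :\: W) t)).
  by apply: ler_sum => j; rewrite inE => /andP[/W_le_t].
rewrite sumr_const card_D -sumr_const.
by apply: ler_sum => j; rewrite inE => /andP[_ /t_le_W].
Qed.

Lemma exists_natmul_gt (R : archiNumFieldType) (d y : R) :
  0 < d -> 0 <= y -> exists N : nat, y < N%:R * d.
Proof.
move=> d_gt0 y_ge0; exists (Num.bound (y / d)).
by rewrite -(ltr_pdivrMr _ _ d_gt0) archi_boundP // divr_ge0 // ltW.
Qed.

Lemma natr_ratio (R : numFieldType) (N x : nat) :
  (0 < x)%N -> (N * x)%:R / x%:R = N%:R :> R.
Proof. by move=> x_gt0; rewrite natrM mulfK // pnatr_eq0 -lt0n. Qed.

Section ApprovalWeight.
Variables (R : realType) (m : nat).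
Implicit Types (alpha : nat -> R) (A : profile m) (W : {set 'I_m}).

Definition approval_weight alpha A (j : 'I_m) : R :=
  \sum_(v <- voters A) alpha #|ballot A v| * (j \in ballot A v)%:R.

Lemma bswav_scoreE alpha A W :
  bswav_score alpha A W = \sum_(j in W) approval_weight alpha A j.
Proof.
rewrite /bswav_score /approval_weight (exchange_big _ _ (voters A)) /=.
apply: eq_bigr => v _; rewrite -mulr_sumr; congr (_ * _).
rewrite -sum1_card natr_sum big_mkcond [RHS]big_mkcond /=.
by apply: eq_bigr => j _; rewrite inE; case: (j \in ballot A v); case: (j \in W).
Qed.

Lemma bswav_score_swap alpha A W d p : d \in W -> p \notin W ->
  bswav_score alpha A (p |: (W :\ d)) =
  bswav_score alpha A W - approval_weight alpha A d + approval_weight alpha A p.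
Proof.
move=> dW pW; rewrite !bswav_scoreE big_setU1 /=; last by rewrite !inE negb_and pW orbT.
by rewrite [in RHS](big_setD1 d dW) /=; ring.
Qed.

Lemma bswav_winner_swap k alpha A W d p : W \in BSWAV k alpha A ->
  d \in W -> p \notin W -> approval_weight alpha A p <= approval_weight alpha A d.
Proof.
rewrite inE => /andP[W_k /forallP W_max] dW pW.
have := implyP (W_max (p |: (W :\ d))).
rewrite /committee card_swap // (eqP W_k) eqxx bswav_score_swap // => /(_ isT).
lra.
Qed.

Lemma bswav_swap_winner k alpha A W d p : W \in BSWAV k alpha A ->
  d \in W -> p \notin W -> approval_weight alpha A d <= approval_weight alpha A p ->
  p |: (W :\ d) \in BSWAV k alpha A.
Proof.
rewrite !inE => /andP[W_k /forallP W_max] dW pW le_dp.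
rewrite {1}/committee card_swap // -/(committee k W) W_k /=.
apply/forallP => W'; apply/implyP => W'_k; apply: (le_trans (implyP (W_max W') W'_k)).
by rewrite bswav_score_swap //; lra.
Qed.

Lemma bswav_threshold_winner k alpha A W t : #|W| = k ->
  (forall j, j \in W -> t <= approval_weight alpha A j) ->
  (forall j, j \notin W -> approval_weight alpha A j <= t) -> W \in BSWAV k alpha A.
Proof.
move=> card_W t_le_W W_le_t; rewrite inE /committee card_W eqxx /=.
apply/forallP => W'; apply/implyP => /eqP card_W'; rewrite !bswav_scoreE.
by apply: (ler_sum_threshold (t := t)); rewrite ?card_W.
Qed.

Lemma bswav_winner_sub k alpha A (Q : {set 'I_m}) : (k <= #|Q|)%N ->
  (forall p j, p \in Q -> j \notin Q -> approval_weight alpha A j < approval_weight alpha A p) ->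
  forall W, W \in BSWAV k alpha A -> W \subset Q.
Proof.
move=> k_le_Q Q_heavy W W_win; apply/subsetP => j jW; apply/negPn/negP => jQ.
have [p pQ pW] : exists2 p, p \in Q & p \notin W.
  apply/subsetPn/negP => QW; move/negP: jQ; apply.
  move: W_win; rewrite inE => /andP[/eqP card_W _].
  by have /eqP -> : Q == W by rewrite eqEcard QW card_W.
have := bswav_winner_swap W_win jW pW.
by rewrite leNgt Q_heavy.
Qed.

Lemma bswav_winner_exists k alpha A : (k <= m)%N -> exists W, W \in BSWAV k alpha A.
Proof.
move=> k_le_m.
have [W0 _ card_W0] : exists2 W0 : {set 'I_m}, W0 \subset setT & #|W0| = k.
  by apply: exists_subset_card; rewrite cardsT card_ord.
have W0_k : committee k W0 by rewrite /committee card_W0.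
have [W W_k W_max] := @arg_maxP _ R _ _ (committee k) (bswav_score alpha A) W0_k.
exists W; rewrite inE W_k /=; apply/forallP => W'; apply/implyP; exact: W_max.
Qed.

Lemma approval_weight_party_list alpha A P j : party_list_wrt A P ->
  approval_weight alpha A j = alpha #|pblock P j| * (nvotes A (pblock P j))%:R.
Proof.
case=> /and3P[/eqP coverP trivP _] ballotP.
rewrite /approval_weight /nvotes -sum1_count natr_sum mulr_sumr [RHS]big_mkcond /=.
rewrite big_seq [RHS]big_seq; apply: eq_bigr => v /ballotP vP.
have [jv|jv] := boolP (j \in ballot A v).
  by rewrite (def_pblock trivP vP jv) eqxx mulr1.
have [v_j|] := eqVneq (ballot A v) (pblock P j); last by rewrite mulr0.
by move: jv; rewrite v_j mem_pblock coverP inE.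
Qed.

End ApprovalWeight.

Section SAVProperties.
Variables (R : realType) (m k : nat).

Lemma sav_approval_weight (A : profile m) P B c : party_list_wrt A P -> B \in P -> c \in B ->
  approval_weight (@sav_weight R) A c = (nvotes A B)%:R / (#|B|)%:R.
Proof.
move=> A_P BP cB; rewrite (approval_weight_party_list _ _ A_P).
by case: A_P => /and3P[_ trivP _] _; rewrite (def_pblock trivP BP cB) mulrC.
Qed.

Lemma sav_party_proportional : party_proportional R (SAV R (m := m) k).
Proof.
move=> A P A_P W W_win Pi Pj PiP PjP lt_ratio Pi_W.
have [/and3P[_ _ P0] _] := A_P.
apply/subsetP => p pPj; apply/negPn/negP => pW.
have /set0Pn[d dPi] : Pi != set0 by apply: contraNneq P0 => <-.
have := bswav_winner_swap W_win (subsetP Pi_W d dPi) pW.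
by rewrite (sav_approval_weight A_P PjP pPj) (sav_approval_weight A_P PiP dPi) leNgt lt_ratio.
Qed.

Lemma sav_aversion_unanimous : (1 <= k <= m)%N -> aversion_unanimous R (SAV R (m := m) k).
Proof.
move=> /andP[k_gt0 k_le_m] A P A_P Pi PiP all_sub Pj PjP Pj_Pi card_Pj.
have /cards1P[c Pj_c] : #|Pj| == 1%N by apply/eqP.
have [/and3P[/eqP coverP trivP _] _] := A_P.
have cPj : c \in Pj by rewrite Pj_c set11.
have cPi : c \notin Pi.
  by apply: contra Pj_Pi => cPi; rewrite -(def_pblock trivP PjP cPj) (def_pblock trivP PiP cPi).
rewrite ltNge; apply/negP => ratio_le.
have [W W_win] : exists W, W \in SAV R k A by exact: bswav_winner_exists.
have /subsetP W_Pi := all_sub W W_win.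
have /set0Pn[d dW] : W != set0.
  by apply: contraTneq W_win => ->; rewrite inE /committee cards0 eq_sym (gtn_eqF k_gt0).
have cW : c \notin W by apply: contra cPi; apply: W_Pi.
suff /all_sub/subsetP/(_ c (setU11 _ _)) : c |: (W :\ d) \in SAV R k A by apply/negP.
apply: bswav_swap_winner => //.
rewrite (sav_approval_weight A_P PjP cPj) (sav_approval_weight A_P PiP (W_Pi _ dW)).
by rewrite card_Pj divr1.
Qed.

End SAVProperties.

Section ScaledWeights.
Variables (R : realType) (m k : nat) (alpha : nat -> R) (a : R).
Hypothesis alpha_natmul : forall x, (1 <= x <= m.-1)%N -> x%:R * alpha x = a.

(* A ballot approving all m candidates meets every committee in k candidates, so alpha m
   only adds a constant to all scores. *)
Lemma bswav_score_scaled (A : profile m) (W : {set 'I_m}) : #|W| = k ->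
  bswav_score alpha A W = a * bswav_score (@sav_weight R) A W +
    \sum_(v <- voters A) (if #|ballot A v| == m then (alpha m - a / m%:R) * k%:R else 0).
Proof.
move=> card_W; rewrite /bswav_score mulr_sumr -big_split big_seq [RHS]big_seq.
apply: eq_bigr => v vA /=; rewrite /sav_weight.
have v_gt0 : (0 < #|ballot A v|)%N by rewrite card_gt0 ballots_nonempty.
have v_le_m : (#|ballot A v| <= m)%N by rewrite -[leqRHS]card_ord max_card.
have [v_m|v_lt_m] := eqVneq #|ballot A v| m.
  have -> : ballot A v = setT.
    by apply/eqP; rewrite eqEcard subsetT cardsT card_ord v_m leqnn.
  rewrite setIC setIT card_W cardsT card_ord; field.
  by rewrite pnatr_eq0 -lt0n -v_m.
set x := #|ballot A v| in v_gt0 v_le_m v_lt_m *.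
have /alpha_natmul <- : (1 <= x <= m.-1)%N by move/eqP: v_lt_m; lia.
by field; rewrite pnatr_eq0 -lt0n.
Qed.

Lemma bswav_scaled_eq_sav (A : profile m) : 0 < a -> BSWAV k alpha A = SAV R k A.
Proof.
move=> a_gt0; apply/setP => W; rewrite !inE; case W_k: (committee k W) => //=.
apply: eq_forallb => W'; case W'_k: (committee k W') => //=.
by rewrite !bswav_score_scaled ?(eqP W_k) ?(eqP W'_k) // lerD2r ler_pM2l.
Qed.

End ScaledWeights.

Section PartyProfile.
Variables (m : nat) (P : {set {set 'I_m}}) (n : {set 'I_m} -> nat) (B0 : {set 'I_m}).
Hypotheses (partP : partition P [set: 'I_m]) (B0P : B0 \in P) (n_B0 : (0 < n B0)%N).

Definition party_ballots : seq {set 'I_m} := flatten [seq nseq (n B) B | B <- enum P].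

Lemma party_ballotsP B : B \in party_ballots -> B \in P.
Proof. by case/flattenP => _ /mapP[B' B'P ->] /nseqP[-> _]; rewrite -mem_enum. Qed.

Lemma count_party_ballots B : B \in P -> count (pred1 B) party_ballots = n B.
Proof.
move=> BP; rewrite count_flatten sumnE !big_map (bigD1_seq B) ?mem_enum ?enum_uniq //=.
rewrite count_nseq /= eqxx mul1n big1_seq ?addn0 // => B' /andP[B'B _].
by rewrite count_nseq /= (negbTE B'B).
Qed.

Lemma party_voters_neq_nil : iota 0 (size party_ballots) != [::].
Proof.
have : party_ballots != [::].
  by apply: contraTneq n_B0 => no_ballots; rewrite -count_party_ballots // no_ballots.
by case: party_ballots.
Qed.

Lemma party_ballots_nth_neq0 v : v \in iota 0 (size party_ballots) ->
  nth set0 party_ballots v != set0.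
Proof.
rewrite mem_iota add0n => /andP[_ /(mem_nth set0)/party_ballotsP].
by case/and3P: partP => _ _ P0 vP; apply: contraTneq vP => ->.
Qed.

Definition party_profile : profile m :=
  Profile (iota_uniq 0 (size party_ballots)) party_voters_neq_nil party_ballots_nth_neq0.

Lemma party_profile_party_list : party_list_wrt party_profile P.
Proof.
split=> // v /=; rewrite mem_iota add0n => /andP[_ v_lt].
exact/party_ballotsP/mem_nth.
Qed.

Lemma nvotes_party_profile B : B \in P -> nvotes party_profile B = n B.
Proof.
move=> BP; rewrite -count_party_ballots // /nvotes /= -(count_map _ (pred1 B)).
by rewrite -/(mkseq _ _) mkseq_nth.
Qed.

End PartyProfile.

Section LoneParty.
Variables (m : nat) (Q : {set 'I_m}).

Definition lone_party (j : 'I_m) : {set 'I_m} := if j \in Q then Q else [set j].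

Definition lone_parties : {set {set 'I_m}} := [set lone_party j | j : 'I_m].

Lemma mem_lone_party j : j \in lone_party j.
Proof. by rewrite /lone_party; case: ifP; rewrite ?set11. Qed.

Lemma lone_partyP i j : (j \in lone_party i) = (lone_party i == lone_party j).
Proof.
apply/idP/eqP => [|->]; last exact: mem_lone_party.
by rewrite /lone_party; case: ifP => [_ ->|iQ /set1P ->]; rewrite ?iQ.
Qed.

Lemma lone_parties_partition : partition lone_parties [set: 'I_m].
Proof.
apply/and3P; split.
- apply/eqP/setP => j; rewrite inE; apply/bigcupP.
  by exists (lone_party j); rewrite ?imset_f ?mem_lone_party.
- apply/trivIsetP => _ _ /imsetP[i _ ->] /imsetP[i' _ ->] neq_ii'.
  apply/pred0P => j /=; apply: contraNF neq_ii' => /andP[].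
  by rewrite !lone_partyP => /eqP -> /eqP ->.
- by apply/imsetP => -[j _ j0]; move: (mem_lone_party j); rewrite -j0 inE.
Qed.

Lemma pblock_lone_parties j : pblock lone_parties j = lone_party j.
Proof.
have /and3P[_ trivP _] := lone_parties_partition.
by apply: def_pblock; rewrite ?imset_f ?mem_lone_party.
Qed.

Lemma lone_parties_party q : q \in Q -> Q \in lone_parties.
Proof. by move=> qQ; apply/imsetP; exists q; rewrite // /lone_party qQ. Qed.

Lemma lone_parties_set1 j : j \notin Q -> [set j] \in lone_parties.
Proof. by move=> jQ; apply/imsetP; exists j; rewrite // /lone_party (negbTE jQ). Qed.

End LoneParty.

Lemma set1_eqF (T : finType) (A : {set T}) j : j \notin A -> ([set j] == A) = false.
Proof. by apply: contraNF => /eqP <-; rewrite set11. Qed.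

Lemma approval_weight_lone (R : realType) m (alpha : nat -> R) (Q : {set 'I_m}) n B0
    (B0Q : B0 \in lone_parties Q) (n_B0 : (0 < n B0)%N) j :
  approval_weight alpha (party_profile (lone_parties_partition Q) B0Q n_B0) j =
  if j \in Q then alpha #|Q| * (n Q)%:R else alpha 1 * (n [set j])%:R.
Proof.
rewrite (approval_weight_party_list _ _ (party_profile_party_list _ _ _)).
rewrite pblock_lone_parties nvotes_party_profile ?imset_f // /lone_party.
by case: ifP; rewrite ?cards1.
Qed.

Section Characterization.
Variables (R : realType) (m k : nat).
Hypotheses (m_ge2 : (2 <= m)%N) (k_range : (1 <= k <= m.-1)%N).
Variable alpha : nat -> R.
Hypothesis alpha_ge0 : forall x, (1 <= x <= m)%N -> 0 <= alpha x.
Hypothesis bswav_pp : party_proportional R (BSWAV (m := m) k alpha).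

Lemma pp_forbids_heavy_party x (N H : nat) : (1 <= x <= k)%N ->
  alpha 1 * N.+1%:R <= alpha x * (N * x)%:R <= alpha 1 * H%:R -> False.
Proof.
move=> /andP[x_gt0 x_le_k] /andP[c_le_Q Q_le_H].
have [c [Q [W0 [card_Q card_W0 Q_W0 cW0]]]] : exists c : 'I_m, exists Q W : {set 'I_m},
    [/\ #|Q| = x, #|W| = k, Q \subset W & c \notin W].
  by apply: exists_nested_sets; move: k_range => /andP[_ k_lt_m]; lia.
have cQ : c \notin Q by apply: contra cW0; apply: subsetP.
have /set0Pn[q qQ] : Q != set0 by rewrite -card_gt0 card_Q.
pose n B := if B == Q then (N * x)%N else if B == [set c] then N.+1
            else if B \subset W0 then H else 0%N.
have n_c : n [set c] = N.+1 by rewrite /n set1_eqF // eqxx.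
have cP := lone_parties_set1 cQ; have n_c_gt0 : (0 < n [set c])%N by rewrite n_c.
pose A := party_profile (lone_parties_partition Q) cP n_c_gt0.
have wA j : approval_weight alpha A j = if j \in Q then alpha x * (N * x)%:R
    else alpha 1 * (if j == c then N.+1 else if j \in W0 then H else 0%N)%:R.
  rewrite approval_weight_lone card_Q /n eqxx; case: ifP => // /negbT jQ.
  by rewrite set1_eqF // (inj_eq set1_inj) sub1set.
have W0_win : W0 \in BSWAV k alpha A.
  apply: (bswav_threshold_winner (t := alpha x * (N * x)%:R)) => // j; rewrite wA.
    case: ifP => // _ jW0; rewrite jW0; case: eqP => [j_c|//].
    by move: jW0; rewrite j_c (negbTE cW0).
  move=> jW0; rewrite (negbTE jW0) ifN; last by apply: contra jW0; apply: subsetP.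
  case: ifP => // _; rewrite mulr0; apply: mulr_ge0; last exact: ler0n.
  by apply: alpha_ge0; move: k_range => /andP[_ k_lt_m]; lia.
have := bswav_pp (party_profile_party_list _ _ _) W0_win (lone_parties_party qQ) cP.
rewrite !nvotes_party_profile ?(lone_parties_party qQ) // n_c {1}/n eqxx card_Q cards1.
rewrite natr_ratio // divr1 ltr_nat ltnSn => /(_ isT Q_W0)/subsetP/(_ c (set11 c)).
exact/negP.
Qed.

Lemma pp_forbids_light_party x (N : nat) : (1 <= x <= m.-1)%N ->
  alpha x * (N.+1 * x)%:R <= alpha 1 * N%:R -> False.
Proof.
move=> /andP[x_gt0 x_lt_m] Q_le_c.
have [c [e [Q [W0 [card_Q card_W0 /setDP[cW0 cQ] /setDP[eQ eW0]]]]]] :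
    exists c e : 'I_m, exists Q W : {set 'I_m},
    [/\ #|Q| = x, #|W| = k, c \in W :\: Q & e \in Q :\: W].
  by apply: exists_crossing_sets; move: k_range => /andP[k_gt0 k_lt_m]; lia.
pose n B := if B == Q then (N.+1 * x)%N else if B \subset W0 then N else 0%N.
have n_Q : n Q = (N.+1 * x)%N by rewrite /n eqxx.
have n_c : n [set c] = N by rewrite /n set1_eqF // sub1set cW0.
have QP := lone_parties_party eQ; have n_Q_gt0 : (0 < n Q)%N by rewrite n_Q muln_gt0.
pose A := party_profile (lone_parties_partition Q) QP n_Q_gt0.
have wA j : approval_weight alpha A j = if j \in Q then alpha x * (N.+1 * x)%:R
    else alpha 1 * (if j \in W0 then N else 0%N)%:R.
  rewrite approval_weight_lone card_Q n_Q; case: ifP => // /negbT jQ.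
  by rewrite /n set1_eqF // sub1set.
have W0_win : W0 \in BSWAV k alpha A.
  apply: (bswav_threshold_winner (t := alpha x * (N.+1 * x)%:R)) => // j; rewrite wA.
    by case: ifP => // _ ->.
  move=> /negbTE ->; case: ifP => // _; rewrite mulr0; apply: mulr_ge0; last exact: ler0n.
  by apply: alpha_ge0; lia.
have cP := lone_parties_set1 cQ.
have := bswav_pp (party_profile_party_list _ _ _) W0_win cP QP.
rewrite !nvotes_party_profile // n_c n_Q card_Q cards1 natr_ratio // divr1 ltr_nat ltnSn.
rewrite sub1set cW0 => /(_ isT isT)/subsetP/(_ e eQ).
exact/negP.
Qed.

Hypothesis bswav_auc : aversion_unanimous R (BSWAV (m := m) k alpha).

Lemma auc_forbids_heavy_party x (N : nat) : (k < x <= m.-1)%N ->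
  alpha 1 * N.+1%:R < alpha x * (N * x)%:R -> False.
Proof.
move=> /andP[k_lt_x x_lt_m] c_lt_Q.
have [c [_ [Q [_ card_Q _ cQ]]]] : exists c : 'I_m, exists Q' Q : {set 'I_m},
    [/\ #|Q'| = x, #|Q| = x, Q' \subset Q & c \notin Q].
  by apply: exists_nested_sets; lia.
have /set0Pn[q qQ] : Q != set0 by rewrite -card_gt0 card_Q; lia.
pose n B := if B == Q then (N * x)%N else if B == [set c] then N.+1 else 0%N.
have n_c : n [set c] = N.+1 by rewrite /n set1_eqF // eqxx.
have cP := lone_parties_set1 cQ; have n_c_gt0 : (0 < n [set c])%N by rewrite n_c.
pose A := party_profile (lone_parties_partition Q) cP n_c_gt0.
have winners_Q : forall W, W \in BSWAV k alpha A -> W \subset Q.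
  apply: bswav_winner_sub => [|p j pQ jQ]; first by rewrite card_Q ltnW.
  rewrite !approval_weight_lone pQ (negbTE jQ) card_Q /n eqxx set1_eqF //.
  apply: le_lt_trans c_lt_Q; apply: ler_wpM2l; first by apply: alpha_ge0; lia.
  by rewrite ler_nat; case: ifP.
have := bswav_auc (party_profile_party_list _ _ _) (lone_parties_party qQ) winners_Q cP.
rewrite !nvotes_party_profile ?(lone_parties_party qQ) // n_c /n eqxx card_Q.
rewrite natr_ratio; last lia.
by rewrite ltr_nat ltnNge leqnSn set1_eqF // => /(_ isT (cards1 c)).
Qed.

Lemma alpha1_gt0 : 0 < alpha 1.
Proof.
have alpha1_ge0 : 0 <= alpha 1 by apply: alpha_ge0; lia.
rewrite lt_def alpha1_ge0 andbT; apply/negP => /eqP alpha1_0.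
apply: (pp_forbids_heavy_party (x := 1) (N := 0) (H := 0)).
  by case/andP: k_range => -> _.
by rewrite alpha1_0 !mul0r lexx.
Qed.

Lemma natmul_alpha x : (1 <= x <= m.-1)%N -> x%:R * alpha x = alpha 1.
Proof.
move=> /[dup] x_range /andP[x_gt0 x_lt_m]; have a_gt0 := alpha1_gt0.
have b_ge0 : 0 <= alpha x by apply: alpha_ge0; lia.
have x_gt0R : (0 : R) < x%:R by rewrite ltr0n.
have xb_ge0 : 0 <= x%:R * alpha x by rewrite mulr_ge0 // ltW.
case: (ltgtP (x%:R * alpha x) (alpha 1)) => // [light|heavy]; exfalso.
- have [N hN] : exists N : nat, x%:R * alpha x < N%:R * (alpha 1 - x%:R * alpha x).
    by apply: exists_natmul_gt; rewrite // subr_gt0.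
  apply: (pp_forbids_light_party (N := N) x_range).
  rewrite natrM -natr1; nra.
- have [N hN] : exists N : nat, alpha 1 < N%:R * (x%:R * alpha x - alpha 1).
    by apply: exists_natmul_gt; rewrite ?subr_gt0 // ltW.
  have c_lt_Q : alpha 1 * N.+1%:R < alpha x * (N * x)%:R.
    by rewrite natrM -natr1; nra.
  have [x_le_k|k_lt_x] := leqP x k; last first.
    by apply: (auc_forbids_heavy_party (N := N) _ c_lt_Q); rewrite k_lt_x.
  have [H hH] : exists H : nat, alpha x * (N * x)%:R < H%:R * alpha 1.
    by apply: exists_natmul_gt => //; rewrite mulr_ge0.
  apply: (pp_forbids_heavy_party (x := x) (N := N) (H := H)); first by rewrite x_gt0 x_le_k.
  by rewrite (ltW c_lt_Q) /= [alpha 1 * _]mulrC (ltW hH).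
Qed.

End Characterization.

Unset Implicit Arguments.
Set Strict Implicit.

Theorem proposition3 (R : realType) (m k : nat)
    (hm : (2 <= m)%N) (hk : (1 <= k <= m.-1)%N)
    (alpha : nat -> R) (halpha : forall x : nat, (1 <= x <= m)%N -> 0 <= alpha x) :
  (party_proportional R (BSWAV (m := m) k alpha) /\
   aversion_unanimous R (BSWAV (m := m) k alpha))
  <-> (forall A : profile m, BSWAV k alpha A = SAV R k A).
Proof.
split=> [[pp auc] A | bswav_sav].
  apply: (bswav_scaled_eq_sav k (natmul_alpha hm hk halpha pp auc)).
  exact: (alpha1_gt0 hm hk halpha pp).
have k_le_m : (1 <= k <= m)%N by case/andP: hk; lia.
split=> [A P A_P W | A P A_P Pi PiP].
  by rewrite bswav_sav; exact: (sav_party_proportional A_P).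
by rewrite bswav_sav; exact: (sav_aversion_unanimous k_le_m A_P PiP).
Qed.
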